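(* There exists an instance of the throughput-constrained online resource allocation problem (a fixed choice of all primitives, with the horizon $T$ ranging over multiples of $K$) such that every online policy $\pi$ that has myopic vanishing regret satisfies $\mathbb E[\textsc{Reg}]=\mathbb E[V^\pi[\omega]-V^{\textsc{off}}[\omega]]=\Omega(T)$.
   Context: Model. There are $m$ resources and $n$ arrival types. Type $j\in[n]$ has an assignment cost vector $c_j\in\mathbb R^m$ and a set $\mathcal S_j\subseteq[m]$ of allowed resources; $\max_{i,j}|c_{ji}|<\infty$. The horizon has $T$ periods, partitioned into $K=\Theta(1)$ epochs, $T$ a multiple of $K$; epoch $k$ consists of the periods $\mathcal T_k=\{(k-1)T/K+1,\dots,kT/K\}$. In each period $t$ one arrival of type $j^t$ occurs, $j^1,\dots,j^T$ i.i.d. with $\mathbb P(j^t=j)=p_j$ ($p$ not scaling with $T$, unknown to the decision-maker). Write $\omega=(j^t)_{t\le T}$, $\omega_k=(j^t)_{t\in\mathcal T_k}$, $\Lambda_j(t_1:t_2)=\sum_{t_1<\tau\le t_2}\mathbf 1\{j^\tau=j\}$. In period $t$ the decision-maker observes $j^t$ and either rejects the arrival (cost $0$) or assigns it to one resource $i\in\mathcal S_{j^t}$ (cost $c_{j^ti}$). For a policy $\pi$, $Z^\pi_{ji}(t)$ counts type-$j$ arrivals assigned to $i$ in periods $1..t$, $Z^\pi_i=\sum_jZ^\pi_{ji}$, $Z(t_1:t_2)=Z(t_2)-Z(t_1)$. Each epoch $k$ and resource $i$ has a target $\rho_{ki}\in[0,1]$ and a convex $L$-Lipschitz deviation cost $g_{ki}:[0,1]\to\mathbb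 R_{\ge0}$ with $g_{ki}(\rho_{ki})=0$. The cost of $\pi$ is $V^\pi[\omega]=\sum_{j,i}c_{ji}Z^\pi_{ji}(T)+\frac TK\sum_{k\in[K]}\sum_{i}k\,g_{ki}\big(Z^\pi_i(kT/K)/(kT/K)\big)$; $V^{\textsc{off}}[\omega]$ is the minimum of this expression over nonnegative integer assignments satisfying $\sum_iZ_{ji}((k-1)T/K:kT/K)\le\Lambda_j((k-1)T/K:kT/K)$ for all $j,k$ and $Z_{ji}(T)=0$ for $i\notin\mathcal S_j$. Myopic notions. For epoch $k$ and current aggregate consumption $z\in\mathbb N^m$, the myopic offline optimum $V^{\textsc{myo-off}}_k[\omega_k\mid z]$ is the minimum, over nonnegative integers $Z_{ji}((k-1)T/K:kT/K)$ with $\sum_iZ_{ji}((k-1)T/K:kT/K)\le\Lambda_j((k-1)T/K:kT/K)$ and $Z_{ji}=0$ for $i\notin\mathcal S_j$, of $$\sum_{j,i}c_{ji}Z_{ji}\big(\tfrac{(k-1)T}K:\tfrac{kT}K\big)+\frac{kT}K\sum_ig_{ki}\Big(\frac{z_i+Z_i((k-1)T/K:kT/K)}{kT/K}\Big).$$ For a policy $\pi$, $V^\pi_k[\omega_k\mid z]$ denotes the quantity in the last display evaluated at $\pi$'s own assignments in epoch $k$ with $z=Z^\pi((k-1)T/K)$ (the assignment and epoch-$k$ deviation costs incurred during epoch $k$). A policy $\pi$ has myopic vanishing regret if there is $\alpha\in[0,1)$ such that for all $k\in[K]$ and all values of $Z^\pi((k-1)T/K)\in\mathbb N^m$, $\mathbb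 E\big[V^\pi_k[\omega_k\mid Z^\pi((k-1)T/K)]-V^{\textsc{myo-off}}_k[\omega_k\mid Z^\pi((k-1)T/K)]\ \big|\ Z^\pi((k-1)T/K)\big]=O(T^\alpha)$. *)

From HB Require Import structures.
From mathcomp Require Import all_boot all_order all_algebra.
From mathcomp Require Import all_classical all_reals all_analysis.
Set Implicit Arguments.
Unset Strict Implicit.
Unset Printing Implicit Defensive.
Import Order.TTheory GRing.Theory Num.Theory.
Local Open Scope ring_scope.

(* Conventions: resources are 'I_m, arrival types 'I_n, epochs 'I_K where
   the ordinal k : 'I_K is the paper's epoch k+1.  Periods are 0-indexed:
   period t of the paper is index t-1 : 'I_T.  An action is an
   [option 'I_m]: None = reject, Some i = assign to resource i.
   A (possibly randomized, non-anticipating) online policy is a family,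
   indexed by the horizon T, of behavioural decision rules: given the
   past history (list of (arrival type, action) pairs of the previous
   periods) and the current arrival type, it gives the probability of
   each action. *)

Section Model.
Variables (R : realType) (m n K : nat).
Variables (c : 'I_n -> 'I_m -> R) (S : 'I_n -> 'I_m -> bool) (p : 'I_n -> R).
Variables (g : 'I_K -> 'I_m -> R -> R).

Definition policy := nat -> seq ('I_n * option 'I_m) -> 'I_n -> option 'I_m -> R.

Definition traj (T : nat) := {ffun 'I_T -> 'I_n * option 'I_m}.

Definition valid_policy (pol : policy) : Prop :=
  forall (T : nat) (h : seq ('I_n * option 'I_m)) (j : 'I_n),
    (K %| T)%N ->
    (forall a, 0 <= pol T h j a) /\
    \sum_(a : option 'I_m) pol T h j a = 1 /\
    (forall i, ~~ S j i -> pol T h j (Some i) = 0).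

Section Horizon.
Variable T : nat.

Definition history (w : traj T) (t : nat) : seq ('I_n * option 'I_m) :=
  map w (seq.filter (fun i : 'I_T => (i < t)%N) (enum 'I_T)).

Definition prob (pol : policy) (w : traj T) : R :=
  \prod_(t < T) (p (w t).1 * pol T (history w t) (w t).1 (w t).2).

Definition elen : nat := (T %/ K)%N.
Definition eend (k : 'I_K) : nat := (k.+1 * elen)%N.
Definition estart (k : 'I_K) : nat := (k * elen)%N.

Definition Zcons (w : traj T) (i : 'I_m) (t : nat) : nat :=
  (\sum_(s < T | (s < t)%N && ((w s).2 == Some i)) 1)%N.

Definition Lam (w : traj T) (k : 'I_K) (j : 'I_n) : nat :=
  (\sum_(s < T | (estart k <= s < eend k)%N && ((w s).1 == j)) 1)%N.

Definition step_cost (x : 'I_n * option 'I_m) : R :=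
  if x.2 is Some i then c x.1 i else 0.

Definition assign_cost (w : traj T) (a b : nat) : R :=
  \sum_(s < T | (a <= s < b)%N) step_cost (w s).

Definition Vpi (w : traj T) : R :=
  assign_cost w 0 T +
  (T%:R / K%:R) * \sum_(k < K) \sum_(i < m)
     k.+1%:R * g k i ((Zcons w i (eend k))%:R / (eend k)%:R).

(* offline: epoch-wise assignment counts X(k,j,i) (bounded by T, which
   loses nothing since X(k,j,i) <= Lambda_j <= T) *)
Definition off_feasible (w : traj T) (X : {ffun 'I_K * 'I_n * 'I_m -> 'I_T.+1}) : bool :=
  [forall k : 'I_K, forall j : 'I_n,
     (\sum_(i < m) (X (k, j, i) : nat) <= Lam w k j)%N] &&
  [forall k : 'I_K, forall j : 'I_n, forall i : 'I_m,
     ~~ S j i ==> ((X (k, j, i) : nat) == 0%N)].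

Definition off_cost (X : {ffun 'I_K * 'I_n * 'I_m -> 'I_T.+1}) : R :=
  \sum_(k < K) \sum_(j < n) \sum_(i < m) c j i * (X (k, j, i) : nat)%:R +
  (T%:R / K%:R) * \sum_(k < K) \sum_(i < m)
     k.+1%:R * g k i
       ((\sum_(k' < K | (k' <= k)%N) \sum_(j < n) (X (k', j, i) : nat))%:R
          / (eend k)%:R).

(* V^off[omega]: minimum of off_cost over feasible X (the zero assignment
   is feasible, so its cost is a valid initial value for the min) *)
Definition Voff (w : traj T) : R :=
  \big[Order.min / off_cost [ffun=> ord0]]_(X | off_feasible w X) off_cost X.

Definition myo_feasible (w : traj T) (k : 'I_K) (Y : {ffun 'I_n * 'I_m -> 'I_T.+1}) : bool :=
  [forall j : 'I_n, (\sum_(i < m) (Y (j, i) : nat) <= Lam w k j)%N] &&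
  [forall j : 'I_n, forall i : 'I_m, ~~ S j i ==> ((Y (j, i) : nat) == 0%N)].

Definition myo_cost (k : 'I_K) (z : 'I_m -> nat) (Y : {ffun 'I_n * 'I_m -> 'I_T.+1}) : R :=
  \sum_(j < n) \sum_(i < m) c j i * (Y (j, i) : nat)%:R +
  (eend k)%:R * \sum_(i < m)
     g k i ((z i + \sum_(j < n) (Y (j, i) : nat))%:R / (eend k)%:R).

Definition Vmyo_off (w : traj T) (k : 'I_K) (z : 'I_m -> nat) : R :=
  \big[Order.min / myo_cost k z [ffun=> ord0]]_(Y | myo_feasible w k Y) myo_cost k z Y.

Definition Vpi_k (w : traj T) (k : 'I_K) : R :=
  assign_cost w (estart k) (eend k) +
  (eend k)%:R * \sum_(i < m) g k i ((Zcons w i (eend k))%:R / (eend k)%:R).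

Definition Zprev (w : traj T) (k : 'I_K) : 'I_m -> nat :=
  fun i => Zcons w i (estart k).

Definition Pz (pol : policy) (k : 'I_K) (z : 'I_m -> nat) : R :=
  \sum_(w : traj T | [forall i, Zprev w k i == z i]) prob pol w.

Definition cond_myo_regret (pol : policy) (k : 'I_K) (z : 'I_m -> nat) : R :=
  (\sum_(w : traj T | [forall i, Zprev w k i == z i])
      prob pol w * (Vpi_k w k - Vmyo_off w k (Zprev w k))) / Pz pol k z.

Definition exp_regret (pol : policy) : R :=
  \sum_(w : traj T) prob pol w * (Vpi w - Voff w).

End Horizon.

Definition myopic_vanishing_regret (pol : policy) : Prop :=
  exists (alpha C : R) (T0 : nat),
    0 <= alpha /\ alpha < 1 /\
    forall T : nat, (K %| T)%N -> (T0 <= T)%N ->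
    forall (k : 'I_K) (z : 'I_m -> nat),
      0 < Pz T pol k z ->
      cond_myo_regret T pol k z <= C * (T%:R `^ alpha).

End Model.

Definition instance_ok (R : realType) (m n K : nat)
    (p : 'I_n -> R) (rho : 'I_K -> 'I_m -> R) (g : 'I_K -> 'I_m -> R -> R)
    (L : R) : Prop :=
  (0 < K)%N /\
  (forall j, 0 <= p j) /\ \sum_(j < n) p j = 1 /\
  (forall k i, 0 <= rho k i <= 1) /\
  0 <= L /\
  (forall k i, g k i (rho k i) = 0) /\
  (forall k i x, 0 <= x <= 1 -> 0 <= g k i x) /\
  (forall k i x y t, 0 <= x <= 1 -> 0 <= y <= 1 -> 0 <= t <= 1 ->
      g k i (t * x + (1 - t) * y) <= t * g k i x + (1 - t) * g k i y) /\
  (forall k i x y, 0 <= x <= 1 -> 0 <= y <= 1 ->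
      `|g k i x - g k i y| <= L * `|x - y|).

From HB Require Import structures.
From mathcomp Require Import all_boot all_order all_algebra.
From mathcomp Require Import all_classical all_reals all_analysis.
From mathcomp Require Import ring lra.
Import Order.TTheory GRing.Theory Num.Theory.
Set Implicit Arguments.
Unset Strict Implicit.
Unset Printing Implicit Defensive.
Local Open Scope ring_scope.

(* One resource, one arrival type, zero assignment costs and two epochs of
   length E = T/2; epoch 1 charges 1 - x and epoch 2 charges 2x on the
   cumulative utilisation x.  In epoch 1 the myopic offline optimum assigns
   every arrival at cost 0, whereas a policy that has assigned Z(E) arrivals
   pays E - Z(E); myopic vanishing regret thus forces E[Z(E)] >= E - O(T^alpha).
   Through the epoch-2 term every such assignment costs 2, so V^pi >= E + Z(E),
   while rejecting everything costs E.  Hence E[Reg] >= E[Z(E)] = Omega(T). *)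

Section PathProbability.
Variables (R : realType) (A : finType) (F : seq A -> A -> R).
Hypothesis F_sum1 : forall h, \sum_a F h a = 1.

(* [history] is [prefix] at A := 'I_n * option 'I_m. *)
Definition prefix N (w : {ffun 'I_N -> A}) (t : nat) : seq A :=
  map w (seq.filter (fun i : 'I_N => (i < t)%N) (enum 'I_N)).

Definition ffun_rcons N (a : A) (v : {ffun 'I_N -> A}) : {ffun 'I_N.+1 -> A} :=
  [ffun i => if unlift ord_max i is Some j then v j else a].

Lemma ffun_rcons_max N a (v : {ffun 'I_N -> A}) : ffun_rcons a v ord_max = a.
Proof. by rewrite ffunE unlift_none. Qed.

Lemma ffun_rcons_widen N a (v : {ffun 'I_N -> A}) (i : 'I_N) :
  ffun_rcons a v (widen_ord (leqnSn N) i) = v i.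
Proof.
have -> : widen_ord (leqnSn N) i = lift ord_max i.
  by apply: val_inj; rewrite /= /bump leqNgt ltn_ord.
by rewrite ffunE liftK.
Qed.

Lemma ffun_rcons_bij N :
  bijective (fun av : A * {ffun 'I_N -> A} => ffun_rcons av.1 av.2).
Proof.
exists (fun w : {ffun 'I_N.+1 -> A} => (w ord_max, [ffun j => w (lift ord_max j)])).
- move=> [a v] /=; rewrite ffun_rcons_max; congr pair.
  by apply/ffunP => j; rewrite !ffunE liftK.
- move=> w; apply/ffunP => i; rewrite ffunE /=.
  by case: unliftP => [j ->|->]; rewrite ?ffunE.
Qed.

Lemma prefix_ffun_rcons N a (v : {ffun 'I_N -> A}) t :
  (t <= N)%N -> prefix (ffun_rcons a v) t = prefix v t.
Proof.
move=> tN; rewrite /prefix enum_ordSr filter_rcons /= ltnNge tN /=.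
by rewrite filter_map -map_comp; apply: eq_map => i /=; rewrite ffun_rcons_widen.
Qed.

(* Summing out the last coordinate first: its kernel sums to one. *)
Lemma sum_prod_prefix N :
  \sum_(w : {ffun 'I_N -> A}) \prod_(t < N) F (prefix w t) (w t) = 1.
Proof.
elim: N => [|N IHN].
  rewrite (eq_bigr (fun _ => 1)) => [|w _]; last by rewrite big_ord0.
  by rewrite sumr_const card_ffun card_ord.
rewrite (reindex _ (onW_bij _ (@ffun_rcons_bij N))) /=.
rewrite -(pair_big xpredT xpredT (fun a v => \prod_(t < N.+1)
  F (prefix (ffun_rcons a v) t) (ffun_rcons a v t))) /= exchange_big /= -[RHS]IHN.
apply: eq_bigr => v _.
under eq_bigr => a _.
  rewrite big_ord_recr /= ffun_rcons_max prefix_ffun_rcons //.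
  under eq_bigr => t _ do rewrite ffun_rcons_widen prefix_ffun_rcons 1?ltnW //.
  over.
by rewrite -mulr_sumr F_sum1 mulr1.
Qed.

End PathProbability.

Lemma powR_eventually_le (R : realType) (C alpha : R) : alpha < 1 ->
  exists T0 : nat, forall T : nat, (T0 <= T)%N -> C * T%:R `^ alpha <= T%:R.
Proof.
move=> alpha_lt1; have [C_le0|C_gt0] := lerP C 0.
  by exists 0%N => T _; rewrite (le_trans _ (ler0n R T)) // mulr_le0_ge0 ?powR_ge0.
have b_gt0 : 0 < 1 - alpha by rewrite subr_gt0.
exists (Num.bound (C `^ (1 - alpha)^-1)) => T T0T.
have C_le : C <= T%:R `^ (1 - alpha).
  rewrite -[leLHS](powRr1 (ltW C_gt0)) -[X in C `^ X](mulVf (lt0r_neq0 b_gt0)) powRrM.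
  apply: (ge0_ler_powR (ltW b_gt0)); rewrite ?nnegrE ?powR_ge0 ?ler0n //.
  by rewrite (le_trans (ltW (archi_boundP (powR_ge0 _ _)))) ?ler_nat.
rewrite -[leRHS](powRr1 (ler0n R T)) -[X in _ <= _ `^ X](subrK alpha 1).
rewrite powRD; last by rewrite subrK oner_eq0.
by rewrite ler_wpM2r ?powR_ge0.
Qed.

Section Model.
Variables (R : realType) (m n K : nat).
Variables (S : 'I_n -> 'I_m -> bool) (p : 'I_n -> R) (pol : policy R m n).
Variable T : nat.

Lemma Zcons0 (w : traj m n T) i : Zcons w i 0 = 0%N.
Proof. by rewrite /Zcons big_pred0 // => s; rewrite ltn0. Qed.

Lemma leq_Zcons (w : traj m n T) i a b : (a <= b)%N -> (Zcons w i a <= Zcons w i b)%N.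
Proof.
move=> ab; rewrite /Zcons big_mkcond [leqRHS]big_mkcond /=.
apply: leq_sum => s _; case: (ltnP s a) => sa /=; last by case: ifP.
by rewrite (leq_trans sa ab).
Qed.

Lemma sum_ord_range a b : (b <= T)%N -> (\sum_(s < T | (a <= s < b)%N) 1 = b - a)%N.
Proof.
move=> bT; transitivity (\sum_(a <= s < b) 1)%N; last by rewrite sum_nat_const_nat muln1.
rewrite [RHS]big_geq_mkord.
by rewrite [RHS](big_ord_widen_cond T (fun s => true && (a <= s))%N (fun=> 1%N) bT).
Qed.

Lemma Lam_single_type (w : traj m 1 T) (k : 'I_K) j : Lam w k j = elen K T.
Proof.
have eendT : (eend T k <= T)%N.
  by rewrite /eend /elen (leq_trans _ (leq_divM T K)) // mulnC leq_mul2l ltn_ord orbT.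
rewrite /Lam (eq_bigl (fun s : 'I_T => estart T k <= s < eend T k)%N); last first.
  by move=> s; rewrite [j]ord1 [(w s).1]ord1 eqxx andbT.
by rewrite sum_ord_range // /eend /estart mulSn addnK.
Qed.

Hypotheses (pol_valid : valid_policy K S pol) (KT : (K %| T)%N).
Hypotheses (p_ge0 : forall j, 0 <= p j) (p_sum1 : \sum_j p j = 1).

Lemma prob_ge0 (w : traj m n T) : 0 <= prob p pol w.
Proof.
apply: prodr_ge0 => t _; apply: mulr_ge0; first exact: p_ge0.
by have [-> _] := pol_valid (history w t) (w t).1 KT.
Qed.

Lemma sum_prob : \sum_(w : traj m n T) prob p pol w = 1.
Proof.
apply: (sum_prod_prefix (F := fun h x => p x.1 * pol T h x.1 x.2)) => h.
rewrite -(pair_big xpredT xpredT (fun j a => p j * pol T h j a)) /= -[RHS]p_sum1.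
apply: eq_bigr => j _; rewrite -mulr_sumr.
by have [_ [-> _]] := pol_valid h j KT; rewrite mulr1.
Qed.

End Model.

Section FirstEpoch.
Variables (R : realType) (m n K : nat) (c : 'I_n -> 'I_m -> R).
Variables (S : 'I_n -> 'I_m -> bool) (p : 'I_n -> R) (g : 'I_K.+1 -> 'I_m -> R -> R).
Variables (pol : policy R m n) (T : nat).
Hypotheses (pol_valid : valid_policy K.+1 S pol) (KT : (K.+1 %| T)%N).
Hypothesis p_sum1 : \sum_j p j = 1.

Lemma Zprev_first_epoch (w : traj m n T) : [forall i, Zprev w (ord0 : 'I_K.+1) i == 0%N].
Proof. by apply/forallP => i; rewrite /Zprev /estart mul0n Zcons0. Qed.

Lemma Pz_first_epoch : Pz p T pol (ord0 : 'I_K.+1) (fun=> 0%N) = 1.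
Proof.
rewrite /Pz (eq_bigl xpredT) ?(sum_prob pol_valid KT p_sum1) // => w.
by rewrite Zprev_first_epoch.
Qed.

Lemma cond_myo_regret_first_epoch :
  cond_myo_regret c S p g T pol ord0 (fun=> 0%N) =
  \sum_(w : traj m n T)
     prob p pol w * (Vpi_k c g w ord0 - Vmyo_off c S g w ord0 (Zprev w (ord0 : 'I_K.+1))).
Proof.
rewrite /cond_myo_regret Pz_first_epoch divr1.
by apply: eq_bigl => w; rewrite Zprev_first_epoch.
Qed.

End FirstEpoch.

Section Example.
Variable R : realType.

Definition ex_c : 'I_1 -> 'I_1 -> R := fun _ _ => 0.
Definition ex_S : 'I_1 -> 'I_1 -> bool := fun _ _ => true.
Definition ex_p : 'I_1 -> R := fun _ => 1.
Definition ex_rho : 'I_2 -> 'I_1 -> R := fun k _ => if k == ord0 then 1 else 0.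
Definition ex_g : 'I_2 -> 'I_1 -> R -> R :=
  fun k _ x => if k == ord0 then 1 - x else 2 * x.

Lemma ex_p_sum1 : \sum_j ex_p j = 1.
Proof. by rewrite big_ord1. Qed.

Lemma ex_instance_ok : instance_ok ex_p ex_rho ex_g 2.
Proof.
rewrite /instance_ok ex_p_sum1 /ex_p /ex_rho /ex_g.
split=> //; split; first by move=> j; apply: ler01.
split=> //; split; first by move=> k i; case: (k == ord0); rewrite ?lexx ?ler01.
split; first by rewrite ler0n.
split; first by move=> k i; case: (k == ord0); rewrite ?subrr ?mulr0.
split; first by move=> k i x /andP[x0 x1]; case: (k == ord0); lra.
split; first by move=> k i x y t _ _ _; case: (k == ord0); lra.
move=> k i x y _ _; case: (k == ord0).
  by rewrite opprB addrC addrA subrK distrC ler_peMl // ler1n.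
by rewrite -mulrBr normrM ger0_norm.
Qed.

Section Horizon.
Variable T : nat.
Hypotheses (T_even : (2 %| T)%N) (T_gt0 : (0 < T)%N).
Local Notation E := (elen 2 T).

Lemma ex_T_eq : T%:R = 2 * E%:R :> R.
Proof. by rewrite -natrM /elen mulnC divnK. Qed.

Lemma ex_E_gt0 : 0 < E%:R :> R.
Proof. by rewrite -(ltr_pM2l (ltr0n R 2)) mulr0 -ex_T_eq ltr0n. Qed.

Lemma ex_assign_cost (w : traj 1 1 T) a b : assign_cost ex_c w a b = 0.
Proof. by rewrite /assign_cost big1 // => s _; rewrite /step_cost; case: (w s).2. Qed.

Lemma ex_Vpi_ge (w : traj 1 1 T) : E%:R + (Zcons w ord0 E)%:R <= Vpi ex_c ex_g w.
Proof.
rewrite /Vpi ex_assign_cost add0r !big_ord_recr !big_ord0 /= !add0r /ex_g /=.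
rewrite (ord1 ord_max) /eend /= mul1n ex_T_eq natrM.
have z12 : (Zcons w ord0 E)%:R <= (Zcons w ord0 (2 * E))%:R :> R.
  by rewrite ler_nat leq_Zcons // leq_pmull.
have := ex_E_gt0; have := ler0n R (Zcons w ord0 E).
set z1 := (Zcons w ord0 E)%:R; set z2 := (Zcons w ord0 (2 * E))%:R; set e := E%:R.
move=> z1_ge0 e_gt0.
have -> : 2 * e / 2 * (1 * (1 - z1 / e) + 2 * (2 * (z2 / (2 * e)))) = e - z1 + 2 * z2.
  by field; rewrite gt_eqF.
lra.
Qed.

Lemma ex_Voff_le (w : traj 1 1 T) : Voff ex_c ex_S ex_g w <= E%:R.
Proof.
apply: le_trans (bigmin_le_id _ _ _ _) _.
rewrite /off_cost big1 ?add0r; last first.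
  by move=> k _; rewrite big1 // => j _; rewrite big1 // => i _; rewrite /ex_c mul0r.
rewrite !big_ord_recr !big_ord0 /= !add0r /ex_g /=.
rewrite !big1 => [|k _|k _]; try by rewrite big1 // => j _; rewrite ffunE.
by rewrite !mul0r subr0 !mulr0 addr0 !mulr1 ex_T_eq mulrAC divff ?mul1r ?pnatr_eq0.
Qed.

Lemma ex_Vpi_k (w : traj 1 1 T) : Vpi_k ex_c ex_g w ord0 = E%:R - (Zcons w ord0 E)%:R.
Proof.
rewrite /Vpi_k ex_assign_cost add0r big_ord1 /ex_g /= /eend /= mul1n.
by rewrite mulrBr mulr1 mulrCA divff ?mulr1 ?gt_eqF ?ex_E_gt0.
Qed.

Lemma ex_Vmyo_off_le (w : traj 1 1 T) :
  Vmyo_off ex_c ex_S ex_g w ord0 (Zprev w (ord0 : 'I_2)) <= 0.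
Proof.
have E_lt : (E < T.+1)%N by rewrite ltnS leq_div.
apply: le_trans (bigmin_le_cond _ (j := [ffun=> inord E]) _ _) _.
  apply/andP; split; apply/forallP => j; last by apply/forallP.
  by rewrite big_ord1 ffunE inordK // Lam_single_type.
rewrite /myo_cost big1 ?add0r; last by move=> j _; rewrite big1 // => i _; rewrite /ex_c mul0r.
rewrite !big_ord1 ffunE inordK // /ex_g /= /eend /= mul1n /Zprev /estart mul0n Zcons0 add0n.
by rewrite divff ?gt_eqF ?ex_E_gt0 // subrr mulr0.
Qed.

Lemma ex_regret_lower_bound (w : traj 1 1 T) :
  E%:R - (Vpi_k ex_c ex_g w ord0 - Vmyo_off ex_c ex_S ex_g w ord0 (Zprev w (ord0 : 'I_2)))
  <= Vpi ex_c ex_g w - Voff ex_c ex_S ex_g w.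
Proof.
have := ex_Vmyo_off_le w; have := ex_Vpi_ge w; have := ex_Voff_le w.
rewrite ex_Vpi_k; lra.
Qed.

Lemma ex_exp_regret_lower_bound (pol : policy R 1 1) : valid_policy 2 ex_S pol ->
  E%:R - cond_myo_regret ex_c ex_S ex_p ex_g T pol ord0 (fun=> 0%N)
  <= exp_regret ex_c ex_S ex_p ex_g T pol.
Proof.
move=> pol_valid.
rewrite (cond_myo_regret_first_epoch ex_c ex_g pol_valid T_even ex_p_sum1).
have -> : E%:R = \sum_(w : traj 1 1 T) prob ex_p pol w * E%:R.
  by rewrite -mulr_suml (sum_prob pol_valid T_even ex_p_sum1) mul1r.
rewrite -sumrB; apply: ler_sum => w _; rewrite -mulrBr.
apply: ler_wpM2l; last exact: ex_regret_lower_bound.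
by apply: (prob_ge0 pol_valid T_even) => j; apply: ler01.
Qed.

End Horizon.

End Example.

Theorem proposition1 (R : realType) :
  exists (m n K : nat) (c : 'I_n -> 'I_m -> R) (S : 'I_n -> 'I_m -> bool)
         (p : 'I_n -> R) (rho : 'I_K -> 'I_m -> R)
         (g : 'I_K -> 'I_m -> R -> R) (L : R),
    instance_ok p rho g L /\
    forall pol : policy R m n,
      valid_policy K S pol ->
      myopic_vanishing_regret c S p g pol ->
      exists (cst : R) (T0 : nat), 0 < cst /\
        forall T : nat, (K %| T)%N -> (T0 <= T)%N ->
          cst * T%:R <= exp_regret c S p g T pol.
Proof.
exists 1%N, 1%N, 2%N, (@ex_c R), ex_S, (@ex_p R), (@ex_rho R), (@ex_g R), 2.
split; first exact: ex_instance_ok.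
move=> pol pol_valid [alpha [C [T1 [_ [alpha_lt1 myopic]]]]].
have [T2 powT2] := powR_eventually_le (4 * C) alpha_lt1.
exists (1 / 4), (maxn (maxn T1 T2) 2); split; first by lra.
move=> T T_even; rewrite !geq_max => /andP[/andP[T1T T2T] T_ge2].
have := myopic T T_even T1T ord0 (fun=> 0%N).
rewrite (Pz_first_epoch pol_valid T_even (ex_p_sum1 R)) ltr01 => /(_ isT).
have := ex_exp_regret_lower_bound T_even (ltnW T_ge2) pol_valid.
have := powT2 T T2T; have := ex_T_eq R T_even.
rewrite -mulrA; lra.
Qed.
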